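(* Let $\epsilon=(\epsilon_n)\in(0,1]^{\mathbb{N}}$, let $x=(x_n),y=(y_n)\in\hat{\mathbb{C}}^{\mathbb{N}}$ be sequences of points of the Riemann sphere, regarded as points of $\mathbb{P}^1(A^\epsilon)$, and let $\omega\in\beta\mathbb{N}$. Then \[\lim_\omega d_{\mathbb{P}^1(\mathbb{C})}(x_n,y_n)^{\epsilon_n}=\lim_\omega d_{\mathbb{P}^1(\mathbb{C}_{\epsilon_n})}(s_{\epsilon_n}^{-1}x_n,s_{\epsilon_n}^{-1}y_n)=d_{\mathbb{P}^1(\mathscr{H}(\omega))}(x_\omega,y_\omega).\]
   Context: $A^\epsilon=\{(x_n)\in\mathbb{C}^{\mathbb{N}}:\sup_n|x_n|^{\epsilon_n}<\infty\}$ with norm $\sup_n|x_n|^{\epsilon_n}$; $\beta\mathbb{N}$ the ultrafilters on $\mathbb{N}$; $\mathscr{H}(\omega)$ the completion of $A^\epsilon/\{x:\lim_\omega|x_n|^{\epsilon_n}=0\}$ with norm $|x|_\omega=\lim_\omega|x_n|^{\epsilon_n}$. A sequence $(x_n)$ in $\hat{\mathbb{C}}$ defines a point of $\mathbb{P}^1(A^\epsilon)$: write $x_n=[z_{0,n}\colon z_{1,n}]$ with $\max(|z_{0,n}|,|z_{1,n}|)=1$, and take $[z_0\colon z_1]$ with $z_i=(z_{i,n})\in A^\epsilon$ (this gives a bijection $\hat{\mathbb{C}}^{\mathbb{N}}\to\mathbb{P}^1(A^\epsilon)$); $x_\omega\in\mathbb{P}^1(\mathscr{H}(\omega))$ is its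 image $[z_{0,\omega}\colon z_{1,\omega}]$. $\mathbb{C}_e=(\mathbb{C},|\cdot|^e)$, and $s_e\colon\mathbb{P}^{1,an}_{\mathbb{C}_e}\to\hat{\mathbb{C}}$ is the homeomorphism sending a seminorm to its $1/e$-th power (restricting to the identity of $\mathbb{P}^1(\mathbb{C})$ on rigid points). Spherical distances: on $\mathbb{P}^1(k)$ with $k$ Archimedean isometric to $\mathbb{C}_e$ (norm $|\cdot|_k$), $d([z_0\colon z_1],[w_0\colon w_1])=\frac{|z_0w_1-z_1w_0|_k}{(|z_0|_k^{2/e}+|z_1|_k^{2/e})^{e/2}(|w_0|_k^{2/e}+|w_1|_k^{2/e})^{e/2}}$ (for $e=1$ this is the standard chordal metric $d_{\mathbb{P}^1(\mathbb{C})}$); for $k$ non-Archimedean, $d=\frac{|z_0w_1-z_1w_0|}{\max\{|z_0|,|z_1|\}\max\{|w_0|,|w_1|\}}$. *)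

From HB Require Import structures.
From mathcomp Require Import all_boot all_order all_algebra.
From mathcomp Require Import all_classical all_reals all_analysis.
From mathcomp Require Import complex.
Set Implicit Arguments. Unset Strict Implicit. Unset Printing Implicit Defensive.
Import Order.TTheory GRing.Theory Num.Theory.
Import numFieldNormedType.Exports.
Local Open Scope ring_scope.
Local Open Scope classical_set_scope.

Notation normc := ComplexField.Normc.normc.

Section Defs.
Variable R : realType.

(* A point [z0 : z1] of the Riemann sphere P^1(C), given by a representative
   normalized by max(|z0|,|z1|) = 1. *)
Definition normalized_rep (z0 z1 : R[i]) : Prop :=
  Num.max (normc z0) (normc z1) = 1.

Definition chordal (z0 z1 w0 w1 : R[i]) : R :=
  normc (z0 * w1 - z1 * w0) /
  (Num.sqrt (normc z0 ^+ 2 + normc z1 ^+ 2) *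
   Num.sqrt (normc w0 ^+ 2 + normc w1 ^+ 2)).

(* Spherical distance on P^1(k), k Archimedean isometric to C_e, written
   in terms of the values of |.|_k :
   nD = |z0 w1 - z1 w0|_k, n0 = |z0|_k, n1 = |z1|_k, m0 = |w0|_k, m1 = |w1|_k. *)
Definition sph_arch (e nD n0 n1 m0 m1 : R) : R :=
  nD / ((n0 `^ (2 / e) + n1 `^ (2 / e)) `^ (e / 2) *
        (m0 `^ (2 / e) + m1 `^ (2 / e)) `^ (e / 2)).

Definition sph_nonarch (nD n0 n1 m0 m1 : R) : R :=
  nD / (Num.max n0 n1 * Num.max m0 m1).

(* d_{P^1(C_e)} between the rigid points [z0:z1] = s_e^{-1}[z0:z1] and
   [w0:w1] = s_e^{-1}[w0:w1]; the norm of C_e is |.|^e. *)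
Definition sph_Ce (e : R) (z0 z1 w0 w1 : R[i]) : R :=
  sph_arch e (normc (z0 * w1 - z1 * w0) `^ e)
    (normc z0 `^ e) (normc z1 `^ e) (normc w0 `^ e) (normc w1 `^ e).

Definition ulim (om : set_system nat) (u : nat -> R) : R := lim (u @ om).

(* The norm |.|_omega of H(omega) on the image of u = (u_n) in A^eps:
   |u|_omega = lim_omega |u_n|^{eps_n}. *)
Definition normH (eps : nat -> R) (om : set_system nat) (u : nat -> R[i]) : R :=
  ulim om (fun n => normc (u n) `^ eps n).

Definition two_H (eps : nat -> R) (om : set_system nat) : R :=
  normH eps om (fun _ => 2%:R).

(* H(omega) is Archimedean iff |2|_omega > 1; then it is isometric to C_e
   with |2|_omega = 2^e, i.e. e = log_2 |2|_omega. *)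
Definition H_archimedean (eps : nat -> R) (om : set_system nat) : bool :=
  1 < two_H eps om.

Definition H_exponent (eps : nat -> R) (om : set_system nat) : R :=
  ln (two_H eps om) / ln 2%:R.

(* Spherical distance d_{P^1(H(omega))}(x_omega, y_omega), where
   x_omega = [z0_omega : z1_omega], y_omega = [w0_omega : w1_omega] are the
   images of the points [z0 : z1], [w0 : w1] of P^1(A^eps). *)
Definition sph_H (eps : nat -> R) (om : set_system nat)
    (z0 z1 w0 w1 : nat -> R[i]) : R :=
  let nD := normH eps om (fun n => z0 n * w1 n - z1 n * w0 n) in
  let n0 := normH eps om z0 in let n1 := normH eps om z1 in
  let m0 := normH eps om w0 in let m1 := normH eps om w1 in
  if H_archimedean eps om
  then sph_arch (H_exponent eps om) nD n0 n1 m0 m1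
  else sph_nonarch nD n0 n1 m0 m1.

End Defs.

From HB Require Import structures.
From mathcomp Require Import all_boot all_order all_algebra.
From mathcomp Require Import all_classical all_reals all_analysis.
From mathcomp Require Import complex.
From mathcomp Require Import ring lra.
Import Order.TTheory GRing.Theory Num.Theory.
Import numFieldNormedType.Exports.
Local Open Scope ring_scope.
Local Open Scope classical_set_scope.

(* Pointwise, d_{P^1(C_e)} is the e-th power of the chordal metric: raising the
   moduli to the power e and then the sums of their (2/e)-th powers to the power
   e/2 just gives back the e-th power of the Euclidean norms.
   Along the ultrafilter every bounded real sequence converges; let e be the limit
   of eps_n, so that |2|_omega = 2^e.  If e > 0, then u_n^{eps_n} tends to
   (lim u_n)^e for bounded u_n >= 0, so |z|_omega = (lim |z_n|)^e and both sides
   are D / (hypot * hypot)^e.  If e = 0, H(omega) is non-Archimedean: the chordal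
   denominators lie in [1, 4], so their eps_n-th powers tend to 1, and since one
   coordinate of a normalized representative has modulus 1 on an omega-large set,
   the max of the omega-norms of the coordinates is 1. *)

Section Spherical.
Context {R : realType}.

Definition hypot (a b : R) : R := Num.sqrt (a ^+ 2 + b ^+ 2).

Lemma normc_ge0 (z : R[i]) : 0 <= normc z.
Proof. by case: z => a b; exact: sqrtr_ge0. Qed.

Lemma normc2 : normc (2%:R : R[i]) = 2.
Proof. by rewrite (@normcMn R 1 2) ComplexField.Normc.normc1. Qed.

Lemma normc_sub_mul (a b c d : R[i]) :
  normc (a * b - c * d) <= normc a * normc b + normc c * normc d.
Proof.
rewrite -!ComplexField.Normc.normcM -(normcN (c * d)).
exact: le_normcD.
Qed.

Lemma powR_div (x y r : R) : 0 <= x -> 0 <= y -> (x / y) `^ r = x `^ r / y `^ r.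
Proof.
by move=> x_ge0 y_ge0; rewrite powRM ?invr_ge0 // -powR_inv1 // -powRrM mulN1r powRN.
Qed.

Lemma chordalE (z0 z1 w0 w1 : R[i]) : chordal z0 z1 w0 w1 =
  normc (z0 * w1 - z1 * w0) / (hypot (normc z0) (normc z1) * hypot (normc w0) (normc w1)).
Proof. by []. Qed.

Lemma sph_arch_powR (e D a0 a1 b0 b1 : R) : 0 < e ->
  0 <= a0 -> 0 <= a1 -> 0 <= b0 -> 0 <= b1 ->
  sph_arch e D (a0 `^ e) (a1 `^ e) (b0 `^ e) (b1 `^ e) = D / (hypot a0 a1 * hypot b0 b1) `^ e.
Proof.
move=> e_gt0 a0_ge0 a1_ge0 b0_ge0 b1_ge0.
have powR_sqr x : 0 <= x -> (x `^ e) `^ (2 / e) = x ^+ 2.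
  by move=> x_ge0; rewrite -powRrM mulrCA divff ?gt_eqF // mulr1 powR_mulrn.
have powR_half x : 0 <= x -> x `^ (e / 2) = Num.sqrt x `^ e.
  by move=> x_ge0; rewrite -powR12_sqrt // -powRrM mulrC.
rewrite /sph_arch !powR_sqr // !powR_half ?addr_ge0 ?sqr_ge0 //.
by rewrite powRM ?sqrtr_ge0.
Qed.

Lemma chordal_powR (e : R) (z0 z1 w0 w1 : R[i]) : 0 < e ->
  chordal z0 z1 w0 w1 `^ e = sph_Ce e z0 z1 w0 w1.
Proof.
move=> e_gt0; rewrite /sph_Ce sph_arch_powR ?normc_ge0 // chordalE.
by rewrite powR_div ?mulr_ge0 ?normc_ge0 ?sqrtr_ge0.
Qed.

Section NormalizedRep.
Context {z0 z1 : R[i]} (z_normalized : normalized_rep z0 z1).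

Lemma normalized_rep_le1 : normc z0 <= 1 /\ normc z1 <= 1.
Proof. by rewrite -z_normalized le_max lexx le_max lexx orbT. Qed.

Lemma normalized_rep_eq1 : normc z0 = 1 \/ normc z1 = 1.
Proof. by move: z_normalized; rewrite /normalized_rep maxEle; case: ifP; [right|left]. Qed.

Lemma normalized_rep_hypot : 1 <= hypot (normc z0) (normc z1) <= 2.
Proof.
have [z0_le1 z1_le1] := normalized_rep_le1.
have z0_ge0 := normc_ge0 z0; have z1_ge0 := normc_ge0 z1.
have sqrt4 : Num.sqrt (2 ^+ 2) = 2 :> R by rewrite sqrtr_sqr ger0_norm.
apply/andP; split.
  by rewrite -sqrtr1 ler_sqrt ?addr_ge0 ?sqr_ge0 //; case: normalized_rep_eq1 => ->; nra.
by rewrite -[leRHS]sqrt4 ler_sqrt ?sqr_ge0 //; nra.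
Qed.

End NormalizedRep.

Lemma normalized_rep_det (z0 z1 w0 w1 : R[i]) :
  normalized_rep z0 z1 -> normalized_rep w0 w1 ->
  normc (z0 * w1 - z1 * w0) <= 2.
Proof.
move=> /normalized_rep_le1 [z0_le1 z1_le1] /normalized_rep_le1 [w0_le1 w1_le1].
apply: le_trans (normc_sub_mul _ _ _ _) _.
by rewrite -[2]/(1 + 1 : R) lerD // mulr_ile1 ?normc_ge0.
Qed.

End Spherical.

Section PowRLimits.
Context {R : realType} {T : Type} {F : set_system T} {FF : ProperFilter F}.

Lemma cvg_powR_base_gt0 {u e : T -> R} {a r : R} :
  u @ F --> a -> e @ F --> r -> 0 < a ->
  (fun t => u t `^ e t) @ F --> a `^ r.
Proof.
move=> ua er a_gt0.
have lnu : ((@ln R) \o u) @ F --> ln a := cvg_comp _ _ ua (continuous_ln a_gt0).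
have -> : a `^ r = expR (r * ln a) by rewrite /powR gt_eqF.
apply: cvg_trans (cvg_comp _ _ (cvgM er lnu) (@continuous_expR R _)).
apply: near_eq_cvg; near=> t; rewrite /= /powR gt_eqF //.
by near: t; exact: cvgr_gt ua _ a_gt0.
Unshelve. all: by end_near. Qed.

Lemma cvg_powR_exp_gt0 {u e : T -> R} {a r : R} :
  (forall t, 0 <= u t) -> u @ F --> a -> e @ F --> r -> 0 < r ->
  (fun t => u t `^ e t) @ F --> a `^ r.
Proof.
move=> u_ge0 ua er r_gt0.
have a_ge0 : 0 <= a by apply: (cvgr_to_ge ua); exact: nearW.
have [a0|a_neq0] := eqVneq a 0; last first.
  by apply: cvg_powR_base_gt0; rewrite // lt_neqAle eq_sym a_neq0.
rewrite {}a0 powR0 ?gt_eqF // in ua *.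
apply/cvgrPdist_le => eta eta_gt0.
have r2_gt0 : 0 < r / 2 by rewrite divr_gt0.
near=> t; rewrite sub0r normrN ger0_norm ?powR_ge0 //.
have et_gt : r / 2 < e t.
  by near: t; apply: cvgr_gt er _ _; rewrite ltr_pdivrMr // ltr_pMr // ltr1n.
have [->|ut_neq0] := eqVneq (u t) 0.
  by rewrite powR0 ?ltW // gt_eqF // (lt_trans r2_gt0).
have ut_gt0 : 0 < u t by rewrite lt_neqAle eq_sym ut_neq0 u_ge0.
have ut_le1 : u t <= 1 by apply: ltW; near: t; exact: cvgr_lt ua _ ltr01.
have ut_small : u t <= eta `^ (2 / r).
  by apply: ltW; near: t; apply: cvgr_lt ua _ _; rewrite powR_gt0.
apply: (le_trans (y := u t `^ (r / 2))).
  by apply: ger_powR; [rewrite ut_gt0 | exact: ltW].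
apply: (le_trans (y := (eta `^ (2 / r)) `^ (r / 2))).
  by apply: ge0_ler_powR; rewrite ?nnegrE ?powR_ge0 ?u_ge0 ?(ltW r2_gt0).
rewrite -powRrM (_ : 2 / r * (r / 2) = 1); last by field; rewrite gt_eqF.
by rewrite powRr1 // ltW.
Unshelve. all: by end_near. Qed.

End PowRLimits.

Lemma cvg_hypot {R : realType} {T : Type} {F : set_system T} {FF : Filter F}
    {u v : T -> R} {a b : R} :
  u @ F --> a -> v @ F --> b -> (fun t => hypot (u t) (v t)) @ F --> hypot a b.
Proof.
move=> ua vb.
have sum_cvg : (fun t => u t ^+ 2 + v t ^+ 2) @ F --> a ^+ 2 + b ^+ 2.
  exact: cvgD (cvgM ua ua) (cvgM vb vb).
exact: cvg_comp _ _ sum_cvg (@sqrt_continuous R _).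
Qed.

Section Ultralimits.
Context {R : realType} (om : set_system nat) {om_ultra : UltraFilter om}.

Lemma cvg_ulim (u : nat -> R) (l : R) : u @ om --> l -> ulim om u = l.
Proof. exact: cvg_lim. Qed.

(* A bounded sequence has a cluster point in [a, b] by compactness, and a
   cluster point of an ultrafilter is a limit. *)
Lemma ulim_cvg {u : nat -> R} {a b : R} : (forall n, a <= u n <= b) ->
  u @ om --> ulim om u.
Proof.
move=> u_itv.
have : (u @ om) `[a, b] by apply: nearW => n /=; rewrite in_itv /= u_itv.
move=> /(@segment_compact R a b (u @ om) _) [] // p [_ p_cluster].
suff up : u @ om --> p by rewrite /ulim (cvg_lim _ up).
move=> B /= Bp.
have [//|Bc] := in_ultra_setVsetC (u @^-1` B) om_ultra.
by have [q []] := p_cluster (~` B) B Bc Bp.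
Qed.

Lemma ulim_itv {u : nat -> R} {a b : R} : (forall n, a <= u n <= b) ->
  a <= ulim om u <= b.
Proof.
move=> u_itv; have u_cvg := ulim_cvg u_itv.
by rewrite (cvgr_to_ge u_cvg) ?(cvgr_to_le u_cvg) //; apply: nearW => n; case/andP: (u_itv n).
Qed.

Section NormcBounded.
Context {z : nat -> R[i]} (z_le1 : forall n, normc (z n) <= 1).

Let z_itv n : 0 <= normc (z n) <= 1. Proof. by rewrite normc_ge0 z_le1. Qed.

Lemma ulim_normc_cvg : (fun n => normc (z n)) @ om --> ulim om (fun n => normc (z n)).
Proof. exact: ulim_cvg z_itv. Qed.

Lemma ulim_normc_ge0 : 0 <= ulim om (fun n => normc (z n)).
Proof. by case/andP: (ulim_itv z_itv). Qed.

End NormcBounded.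

Variable eps : nat -> R.
Hypothesis eps_itv : forall n, 0 <= eps n <= 1.

Local Notation e := (ulim om eps).

Lemma normH_powR {z : nat -> R[i]} : (forall n, normc (z n) <= 1) -> 0 < e ->
  normH eps om z = ulim om (fun n => normc (z n)) `^ e.
Proof.
move=> z_le1 e_gt0; apply: cvg_ulim; apply: cvg_powR_exp_gt0 => //.
- by move=> n; exact: normc_ge0.
- exact: ulim_normc_cvg.
- exact: ulim_cvg eps_itv.
Qed.

Lemma normH_le1 {z : nat -> R[i]} : (forall n, normc (z n) <= 1) -> normH eps om z <= 1.
Proof.
move=> z_le1.
have zeps_itv n : 0 <= normc (z n) `^ eps n <= 1.
  rewrite powR_ge0 /=; apply: (le_trans (y := 1 `^ eps n)); last by rewrite powR1.
  by apply: ge0_ler_powR; rewrite ?nnegrE ?normc_ge0 //; case/andP: (eps_itv n).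
by case/andP: (ulim_itv zeps_itv).
Qed.

Lemma normH_eq1 {z : nat -> R[i]} : (\forall n \near om, normc (z n) = 1) -> normH eps om z = 1.
Proof.
move=> z_eq1; apply: cvg_ulim; apply: cvg_near_cst.
by apply: filterS z_eq1 => n /= ->; rewrite powR1.
Qed.

Lemma normH_max (z0 z1 : nat -> R[i]) : (forall n, normalized_rep (z0 n) (z1 n)) ->
  Num.max (normH eps om z0) (normH eps om z1) = 1.
Proof.
move=> z_normalized.
have z0_le1 n := (normalized_rep_le1 (z_normalized n)).1.
have z1_le1 n := (normalized_rep_le1 (z_normalized n)).2.
have [z0_eq1|z0_neq1] := in_ultra_setVsetC [set n | normc (z0 n) = 1] om_ultra.
  by rewrite (normH_eq1 z0_eq1) max_l // normH_le1.
rewrite (@normH_eq1 z1) ?max_r ?normH_le1 //.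
by apply: filterS z0_neq1 => n /=; case: (normalized_rep_eq1 (z_normalized n)).
Qed.

Lemma two_H_powR : two_H eps om = 2 `^ e.
Proof.
apply: cvg_ulim; rewrite normc2.
by apply: cvg_powR_base_gt0; [exact: cvg_cst | exact: ulim_cvg eps_itv |].
Qed.

Lemma H_archimedeanE : H_archimedean eps om = (0 < e).
Proof.
rewrite /H_archimedean two_H_powR.
have [e_gt0|e_le0] := ltrP 0 e.
  by rewrite /powR pnatr_eq0 expR_gt1 mulr_gt0 // ln_gt0 // ltr1n.
have -> : e = 0 by apply/le_anti; rewrite e_le0; case/andP: (ulim_itv eps_itv).
by rewrite powRr0 ltxx.
Qed.

Lemma H_exponentE : H_exponent eps om = e.
Proof. by rewrite /H_exponent two_H_powR ln_powR mulfK // gt_eqF // ln_gt0 // ltr1n. Qed.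

Section Chordal.
Variables x0 x1 y0 y1 : nat -> R[i].
Hypotheses (x_normalized : forall n, normalized_rep (x0 n) (x1 n))
  (y_normalized : forall n, normalized_rep (y0 n) (y1 n)).

Let x0_le1 n := (normalized_rep_le1 (x_normalized n)).1.
Let x1_le1 n := (normalized_rep_le1 (x_normalized n)).2.
Let y0_le1 n := (normalized_rep_le1 (y_normalized n)).1.
Let y1_le1 n := (normalized_rep_le1 (y_normalized n)).2.

Local Notation a0 := (ulim om (fun n => normc (x0 n))).
Local Notation a1 := (ulim om (fun n => normc (x1 n))).
Local Notation b0 := (ulim om (fun n => normc (y0 n))).
Local Notation b1 := (ulim om (fun n => normc (y1 n))).

Lemma ulim_chordal_powR :
  ulim om (fun n => chordal (x0 n) (x1 n) (y0 n) (y1 n) `^ eps n) =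
  normH eps om (fun n => x0 n * y1 n - x1 n * y0 n) /
  (hypot a0 a1 * hypot b0 b1) `^ e.
Proof.
pose P n := hypot (normc (x0 n)) (normc (x1 n)) * hypot (normc (y0 n)) (normc (y1 n)).
have P_cvg : P @ om --> hypot a0 a1 * hypot b0 b1.
  exact: cvgM (cvg_hypot (ulim_normc_cvg x0_le1) (ulim_normc_cvg x1_le1))
    (cvg_hypot (ulim_normc_cvg y0_le1) (ulim_normc_cvg y1_le1)).
have P_ge1 n : 1 <= P n.
  have /andP[x_ge1 _] := normalized_rep_hypot (x_normalized n).
  have /andP[y_ge1 _] := normalized_rep_hypot (y_normalized n).
  exact: mulr_ege1.
have det_itv n : 0 <= normc (x0 n * y1 n - x1 n * y0 n) `^ eps n <= 2.
  rewrite powR_ge0 /=; apply: (le_trans (y := 2 `^ eps n)).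
    apply: ge0_ler_powR; rewrite ?nnegrE ?normc_ge0 ?normalized_rep_det //.
    by case/andP: (eps_itv n).
  by rewrite ler1_powR ?ler1n //; case/andP: (eps_itv n).
apply: cvg_ulim.
have -> : (fun n => chordal (x0 n) (x1 n) (y0 n) (y1 n) `^ eps n) =
    (fun n => normc (x0 n * y1 n - x1 n * y0 n) `^ eps n / P n `^ eps n).
  by apply: funext => n; rewrite chordalE powR_div ?normc_ge0 // (le_trans ler01 (P_ge1 n)).
have p_gt0 : 0 < hypot a0 a1 * hypot b0 b1.
  by rewrite (lt_le_trans ltr01) // (cvgr_to_ge P_cvg) //; exact: nearW.
apply: cvgM (ulim_cvg det_itv) (cvgV _ (cvg_powR_base_gt0 P_cvg (ulim_cvg eps_itv) p_gt0)).
by rewrite gt_eqF // powR_gt0.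
Qed.

Lemma ulim_chordal_powR_sph_H :
  ulim om (fun n => chordal (x0 n) (x1 n) (y0 n) (y1 n) `^ eps n) = sph_H eps om x0 x1 y0 y1.
Proof.
rewrite ulim_chordal_powR /sph_H H_archimedeanE H_exponentE.
have [e_gt0|e_le0] := ltrP 0 e.
  rewrite (normH_powR x0_le1) // (normH_powR x1_le1) // (normH_powR y0_le1) //.
  by rewrite (normH_powR y1_le1) // sph_arch_powR // ulim_normc_ge0.
have -> : e = 0 by apply/le_anti; rewrite e_le0; case/andP: (ulim_itv eps_itv).
by rewrite powRr0 divr1 /sph_nonarch !normH_max // !mulr1 divr1.
Qed.

End Chordal.

End Ultralimits.

Theorem mainTheorem8 (R : realType) (eps : nat -> R)
  (x0 x1 y0 y1 : nat -> R[i]) (om : set_system nat) :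
  (forall n, 0 < eps n <= 1) ->
  (forall n, normalized_rep (x0 n) (x1 n)) ->
  (forall n, normalized_rep (y0 n) (y1 n)) ->
  UltraFilter om ->
  ulim om (fun n => chordal (x0 n) (x1 n) (y0 n) (y1 n) `^ eps n)
    = ulim om (fun n => sph_Ce (eps n) (x0 n) (x1 n) (y0 n) (y1 n))
  /\
  ulim om (fun n => sph_Ce (eps n) (x0 n) (x1 n) (y0 n) (y1 n))
    = sph_H eps om x0 x1 y0 y1.
Proof.
move=> eps_itv x_normalized y_normalized om_ultra.
have eps_ge0 n : 0 <= eps n <= 1 by case/andP: (eps_itv n) => /ltW -> ->.
have chordal_sph_Ce : (fun n => chordal (x0 n) (x1 n) (y0 n) (y1 n) `^ eps n) =
    (fun n => sph_Ce (eps n) (x0 n) (x1 n) (y0 n) (y1 n)).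
  by apply: funext => n; rewrite chordal_powR //; case/andP: (eps_itv n).
by rewrite -chordal_sph_Ce; split=> //; apply: ulim_chordal_powR_sph_H.
Qed.
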